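(* Let $\mathcal{K}\subseteq\mathbb{R}\cup\{\pm\infty\}$ have nonzero Lebesgue measure, let $\varpi:\mathcal{K}\to\mathbb{R}_{\geq 0}$ be Lebesgue integrable with only countably many zeros, let $d,n,\rho\in\mathbb{N}$, let $\mathbf{f}\in\mathbb{L}^2_{\varpi}(\mathcal{K};\mathbb{R}^d)$ satisfy $\mathsf{F}^{-1}:=\int_{\mathcal{K}}\varpi(\tau)\mathbf{f}(\tau)\mathbf{f}^\top(\tau)\,d\tau\succ 0$, put $F(\tau)=\mathbf{f}(\tau)\otimes I_n$, and let $U\in\mathbb{R}^{n\times n}$ be symmetric with $U\succ 0$. Let $\mathbf{x}\in\mathbb{L}^2_{\varpi}(\mathcal{K};\mathbb{R}^n)$ and let $\Upsilon\in\mathbb{R}^{dn\times\rho n}$, $\mathbf{z}\in\mathbb{R}^{\rho n}$ satisfy $\Upsilon\mathbf{z}=\int_{\mathcal{K}}\varpi(\tau)F(\tau)\mathbf{x}(\tau)\,d\tau=:\boldsymbol{\vartheta}$. Then for every $\widehat{X}=\mathrm{Col}_{i=1}^dX_i\in\mathbb{R}^{dn\times\rho n}$ ($X_i\in\mathbb{R}^{n\times\rho n}$), $$\int_{\mathcal{K}}\varpi(\tau)\mathbf{x}^\top(\tau)U\mathbf{x}(\tau)\,d\tau\geq\mathbf{z}^\top\big[\Upsilon^\top\widehat{X}+\widehat{X}^\top\Upsilon-\widehat{X}^\top(\mathsf{F}^{-1}\otimes U^{-1})\widehat{X}\big]\mathbf{z}.$$ Moreover, this right-hand side equals $\mathbf{z}^\top[\Upsilon^\top\widehat{X}+\widehat{X}^\top\Upsilon-W]\mathbf{z}$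 with $W=\int_{\mathcal{K}}\varpi(\tau)(\mathbf{f}^\top(\tau)\otimes I_{\rho n})Y(\mathbf{f}(\tau)\otimes I_{\rho n})\,d\tau$ for the choice $Y=X^\top U^{-1}X$, $X=[X_1\ \cdots\ X_d]$; and the largest value of the right-hand side over $\widehat{X}$ equals $\boldsymbol{\vartheta}^\top(\mathsf{F}\otimes U)\boldsymbol{\vartheta}$, attained at $\widehat{X}=(\mathsf{F}\otimes U)\Upsilon$.
   Context: $\mathbb{L}^2_{\varpi}(\mathcal{K};\mathbb{R}^m)$ is the set of Lebesgue integrable functions $\phi:\mathcal{K}\to\mathbb{R}^m$ with $\int_{\mathcal{K}}\varpi\phi^\top\phi\,d\tau<\infty$. $\mathrm{Col}$ stacks blocks vertically; $\otimes$ is the Kronecker product. *)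

From HB Require Import structures.
From mathcomp Require Import all_boot all_order all_algebra.
From mathcomp Require Import all_classical all_reals all_analysis.
From mathcomp.real_closed Require Export mxtens.
Set Implicit Arguments. Unset Strict Implicit. Unset Printing Implicit Defensive.
Import Order.TTheory GRing.Theory Num.Theory.
Local Open Scope classical_set_scope.
Local Open Scope ring_scope.

(* Kronecker product: [tensmx A B] (notation A *t B) from mathcomp real_closed
   mxtens, with (A *t B) (i1*p + i2) (j1*q + j2) = A i1 j1 * B i2 j2. *)

Section Defs.
Variable R : realType.

Definition leb := (@lebesgue_measure R).

(* symmetric positive definite is stated separately; this is x^T M x > 0 *)
Definition posdef k (M : 'M[R]_k) : Prop :=
  forall v : 'cV[R]_k, v != 0 -> 0 < (v^T *m M *m v) 0 0.

Definition wint (K : set R) (w : R -> R) p q (M : R -> 'M[R]_(p, q)) : 'M[R]_(p, q) :=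
  \matrix_(i, j) Rintegral leb K (fun t => w t * M t i j).

Definition L2w (K : set R) (w : R -> R) m (g : R -> 'cV[R]_m) : Prop :=
  (forall i, measurable_fun K (fun t => g t i 0)) /\
  leb.-integrable K (fun t => (w t * ((g t)^T *m g t) 0 0)%:E).

Definition Fk d n (f : R -> 'cV[R]_d) (t : R) : 'M[R]_(d * n, n) :=
  castmx (erefl _, mul1n n) (f t *t (1%:M : 'M[R]_n)).

Definition blk d n r (Xhat : 'M[R]_(d * n, r)) (i : 'I_d) : 'M[R]_(n, r) :=
  \matrix_(a, b) Xhat (mxtens_index (i, a)) b.

Definition rowcat d n r (Xhat : 'M[R]_(d * n, r)) : 'M[R]_(n, d * r) :=
  \matrix_(a, c) blk Xhat (mxtens_unindex c).1 a (mxtens_unindex c).2.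

Definition Wmx (K : set R) (w : R -> R) d n r (f : R -> 'cV[R]_d)
  (U : 'M[R]_n) (Xhat : 'M[R]_(d * n, r)) : 'M[R]_r :=
  let X := rowcat Xhat in
  let Y := X^T *m invmx U *m X in
  wint K w (fun t => castmx (mul1n r, mul1n r)
    (((f t)^T *t (1%:M : 'M[R]_r)) *m Y *m (f t *t (1%:M : 'M[R]_r)))).

End Defs.

From HB Require Import structures.
From mathcomp Require Import all_boot all_order all_algebra.
From mathcomp Require Import all_classical all_reals all_analysis.
From mathcomp Require Import measurable_realfun.
From mathcomp.real_closed Require Import mxtens.
From mathcomp.algebra_tactics Require Import ring lra.
Set Implicit Arguments. Unset Strict Implicit. Unset Printing Implicit Defensive.
Import Order.TTheory GRing.Theory Num.Theory.
Local Open Scope classical_set_scope.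
Local Open Scope ring_scope.

(* Write S := \int w x f^T and G := F^-1 = \int w f f^T.  The vector theta is
   the column-stacking of S, so theta^T (G^-1 (x) U) theta = tr (G^-1 S^T U S),
   and expanding 0 <= \int w (x - C f)^T U (x - C f) at the least-squares
   coefficient C := S G^-1 bounds this by \int w x^T U x (Bessel).  Since
   Ups z = theta, the right-hand side is 2 theta^T v - v^T M v at v := Xhat z,
   where M := G (x) U^-1 is positive semidefinite (a weighted integral of
   rank-one terms tensored with U^-1) with inverse P := G^-1 (x) U; completing
   the square bounds it by theta^T P theta, with equality at v = P theta.
   Finally, pointwise (f^T (x) I) X^T U^-1 X (f (x) I) = Xhat^T (f f^T (x) U^-1) Xhat,
   and the weighted integral commutes with the linear map
   N |-> Xhat^T (N (x) U^-1) Xhat, which gives the formula for W. *)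

Section Quadratic.
Variable R : realType.

Definition psdmx k (M : 'M[R]_k) := forall v : 'cV[R]_k, 0 <= (v^T *m M *m v) 0 0.

Lemma posdef_psdmx k (M : 'M[R]_k) : posdef M -> psdmx M.
Proof.
move=> pM v; have [->|v0] := eqVneq v 0; first by rewrite mulmx0 mxE.
exact/ltW/pM.
Qed.

Lemma posdef_unitmx k (M : 'M[R]_k) : posdef M -> M \in unitmx.
Proof.
move=> pM; rewrite unitmxE unitfE; apply/negP => /det0P [v v0 vM].
by have := pM v^T; rewrite trmx_eq0 trmxK vM mul0mx mxE ltxx => /(_ v0).
Qed.

Lemma psdmx_invmx k (U : 'M[R]_k) : U^T = U -> posdef U -> psdmx (invmx U).
Proof.
move=> sU pU v; have uU := posdef_unitmx pU.
have -> : v = U *m (invmx U *m v) by rewrite mulmxA mulmxV // mul1mx.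
rewrite trmx_mul sU -!mulmxA mulKmx // mulmxA.
exact: posdef_psdmx.
Qed.

Lemma completing_square_le k (M P : 'M[R]_k) (u v : 'cV[R]_k) :
  P^T = P -> M *m P = 1%:M -> psdmx M ->
  (u^T *m v + v^T *m u - v^T *m M *m v) 0 0 <= (u^T *m P *m u) 0 0.
Proof.
move=> sP MP psdM; have PM := mulmx1C MP.
have := psdM (v - P *m u).
have -> : (v - P *m u)^T = v^T - u^T *m P by rewrite linearB /= trmx_mul sP.
have MPu : M *m (P *m u) = u by rewrite mulmxA MP mul1mx.
have uPM : u^T *m P *m M = u^T by rewrite -mulmxA PM mulmx1.
rewrite !mulmxBl !mulmxBr uPM -[v^T *m M *m (P *m u)]mulmxA MPu.
by rewrite !mulmxA !mxE; lra.
Qed.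

Lemma completing_square_eq k (M P : 'M[R]_k) (u : 'cV[R]_k) :
  P^T = P -> M *m P = 1%:M ->
  (u^T *m (P *m u) + (P *m u)^T *m u - (P *m u)^T *m M *m (P *m u)) 0 0 =
  (u^T *m P *m u) 0 0.
Proof.
move=> sP MP; rewrite trmx_mul sP -!mulmxA [M *m (P *m u)]mulmxA MP mul1mx.
by rewrite !mulmxA !mxE; lra.
Qed.

Lemma quad_subE k (U : 'M[R]_k) (a b : 'cV[R]_k) : U^T = U ->
  ((a - b)^T *m U *m (a - b)) 0 0 =
  (a^T *m U *m a) 0 0 - 2 * (b^T *m U *m a) 0 0 + (b^T *m U *m b) 0 0.
Proof.
move=> sU; have ba : a^T *m U *m b = b^T *m U *m a.
  have tr11 (A : 'M[R]_1) : A^T = A by apply/matrixP => i j; rewrite !ord1 mxE.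
  by rewrite -[LHS]tr11 !trmx_mul trmxK sU mulmxA.
rewrite [(a - b)^T]linearB /= !mulmxBl !mulmxBr ba !mxE; lra.
Qed.

End Quadratic.

Lemma sqr_coord_le_dotmx (R : realDomainType) m (g : 'cV[R]_m) i :
  g i 0 ^+ 2 <= (g^T *m g) 0 0.
Proof.
rewrite mxE (bigD1 i) //= mxE -expr2 lerDl.
by apply: sumr_ge0 => k _; rewrite mxE -expr2 sqr_ge0.
Qed.

Lemma bilin_mxtrace (R : comNzRingType) m p (A : 'M[R]_(p, m)) (g : 'cV[R]_m)
    (h : 'cV[R]_p) :
  (h^T *m A *m g) 0 0 = \tr (A *m (g *m h^T)).
Proof.
by rewrite mulmxA mxtrace_mulC !mulmxA /mxtrace big_ord1.
Qed.

Section Kronecker.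
Variable R : comNzRingType.

Lemma sum_mxtens_index d n (F : 'I_(d * n) -> R) :
  \sum_p F p = \sum_i \sum_k F (mxtens_index (i, k)).
Proof.
rewrite pair_big /= (reindex (@mxtens_index d n)) /=; first by apply: eq_bigr => -[].
by exists (@mxtens_unindex d n) => p _; rewrite (mxtens_indexK, mxtens_unindexK).
Qed.

Lemma mulmx3E p q r s (A : 'M[R]_(p, q)) (M : 'M[R]_(q, r)) (B : 'M[R]_(r, s)) i j :
  (A *m M *m B) i j = \sum_l \sum_k A i k * M k l * B l j.
Proof. by rewrite mxE; apply: eq_bigr => l _; rewrite mxE mulr_suml. Qed.

Lemma tens_bilinE d n r s (A : 'M[R]_d) (B : 'M[R]_n) (X : 'M[R]_(d * n, r))
    (Y : 'M[R]_(d * n, s)) a b :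
  (X^T *m (A *t B) *m Y) a b =
  \sum_i \sum_j A i j *
    \sum_k \sum_l X (mxtens_index (i, k)) a * B k l * Y (mxtens_index (j, l)) b.
Proof.
rewrite mulmx3E sum_mxtens_index.
under eq_bigr do under eq_bigr do rewrite sum_mxtens_index.
under eq_bigr do rewrite exchange_big /=.
rewrite exchange_big /=; apply: eq_bigr => i _; apply: eq_bigr => j _.
rewrite exchange_big mulr_sumr; apply: eq_bigr => k _.
rewrite mulr_sumr; apply: eq_bigr => l _.
by rewrite tensmxE !mxE; ring.
Qed.

Lemma linear_tensmxl m n p q (B : 'M[R]_(p, q)) :
  linear (fun A : 'M[R]_(m, n) => A *t B).
Proof. by move=> c M N; apply/matrixP => i j; rewrite !mxE mulrDl mulrA. Qed.

(* the inverse of column-stacking: column [i] of [unvec u] is the [i]-th block of [u] *)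
Definition unvec d n (u : 'cV[R]_(d * n)) : 'M[R]_(n, d) :=
  \matrix_(k, i) u (mxtens_index (i, k)) 0.

Lemma tens_quad_mxtrace d n (A : 'M[R]_d) (B : 'M[R]_n) (u : 'cV[R]_(d * n)) :
  (u^T *m (A *t B) *m u) 0 0 = \tr ((unvec u)^T *m B *m unvec u *m A^T).
Proof.
rewrite tens_bilinE /mxtrace; apply: eq_bigr => i _; rewrite mxE.
apply: eq_bigr => j _; rewrite mulmx3E exchange_big mxE mulrC; congr (_ * _).
by apply: eq_bigr => k _; apply: eq_bigr => l _; rewrite !mxE.
Qed.

Lemma tensmx11 d n : (1%:M : 'M[R]_d) *t (1%:M : 'M[R]_n) = 1%:M.
Proof.
apply/matrixP => p q; case: (mxtens_indexP p) => i k; case: (mxtens_indexP q) => j l.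
rewrite tensmxE !mxE (can_eq (@mxtens_indexK _ _)) xpair_eqE.
by case: (i == j); rewrite ?mul1r ?mul0r.
Qed.

End Kronecker.

Lemma mulmx_tens_invmx (R : comUnitRingType) d n (A : 'M[R]_d) (B : 'M[R]_n) :
  A \in unitmx -> B \in unitmx -> (A *t B) *m (invmx A *t invmx B) = 1%:M.
Proof. by move=> uA uB; rewrite tensmx_mul !mulmxV // tensmx11. Qed.

Section BlockColumns.
Variable R : realType.

Lemma cast_ord_mul1n n (k : 'I_n) (e : n = 1 * n) :
  cast_ord e k = mxtens_index (ord0 : 'I_1, k).
Proof. by apply: val_inj => /=; rewrite mul0n add0n. Qed.

Lemma rowcat_mul_tens d n r (X : 'M[R]_(d * n, r)) (v : 'cV[R]_d) :
  castmx (erefl n, mul1n r) (rowcat X *m (v *t (1%:M : 'M[R]_r))) =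
  \sum_i v i 0 *: blk X i.
Proof.
apply/matrixP => k c; rewrite castmxE /= cast_ord_id cast_ord_mul1n summxE mxE.
rewrite sum_mxtens_index; apply: eq_bigr => i _.
rewrite mxE -[blk X i]mulmx1 mxE mulr_sumr; apply: eq_bigr => c' _.
rewrite tensmxE !mxE mxtens_indexK /=; ring.
Qed.

Lemma tens_bilin_blk d n r s (A : 'M[R]_d) (B : 'M[R]_n) (X : 'M[R]_(d * n, r))
    (Y : 'M[R]_(d * n, s)) :
  X^T *m (A *t B) *m Y = \sum_i \sum_j A i j *: ((blk X i)^T *m B *m blk Y j).
Proof.
apply/matrixP => a b; rewrite tens_bilinE summxE; apply: eq_bigr => i _.
rewrite summxE; apply: eq_bigr => j _; rewrite mxE mulmx3E exchange_big /=.
by congr (_ * _); apply: eq_bigr => k _; apply: eq_bigr => l _; rewrite !mxE.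
Qed.

Lemma rowcat_quad_tens d n r (B : 'M[R]_n) (v : 'cV[R]_d) (X : 'M[R]_(d * n, r)) :
  castmx (mul1n r, mul1n r) ((v^T *t (1%:M : 'M[R]_r)) *m
    ((rowcat X)^T *m B *m rowcat X) *m (v *t (1%:M : 'M[R]_r))) =
  X^T *m ((v *m v^T) *t B) *m X.
Proof.
set T := castmx (erefl n, mul1n r) (rowcat X *m (v *t 1%:M)).
transitivity (T^T *m B *m T).
  rewrite -[1%:M as M in v^T *t M]trmx1 -trmx_tens !mulmxA -!trmx_mul -!mulmxA.
  rewrite castmx_mul mulmxA castmx_mul castmx_id trmx_cast /T castmx_mul castmx_id.
  by rewrite !mulmxA.
(* both sides expand to the double sum of v_i v_j X_i^T B X_j, since T = \sum_i v_i X_i *)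
rewrite tens_bilin_blk /T rowcat_mul_tens [(\sum_i _)^T]linear_sum /=.
rewrite !mulmx_suml; apply: eq_bigr => i _; rewrite mulmx_sumr; apply: eq_bigr => j _.
by rewrite linearZ /= linearZ /= -!scalemxAl scalerA !mxE big_ord1 !mxE mulrC.
Qed.

Lemma FkE d n (f : R -> 'cV[R]_d) t (x : 'cV[R]_n) i k :
  (Fk n f t *m x) (mxtens_index (i, k)) 0 = f t i 0 * x k 0.
Proof.
rewrite mxE (bigD1 k) //= big1 => [|j jk].
  by rewrite /Fk castmxE cast_ord_id cast_ord_mul1n tensmxE mxE eqxx mulr1 addr0.
rewrite /Fk castmxE cast_ord_id cast_ord_mul1n tensmxE mxE eq_sym (negbTE jk).
by rewrite mulr0 mul0r.
Qed.

End BlockColumns.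

Lemma linear_entry (R : comNzRingType) p q p' q'
    (L : 'M[R]_(p, q) -> 'M[R]_(p', q')) (N : 'M[R]_(p, q)) a b :
  linear L -> L N a b = \sum_i \sum_j L (delta_mx i j) a b * N i j.
Proof.
move=> linL.
pose L' : {linear 'M[R]_(p, q) -> 'M[R]_(p', q')} :=
  HB.pack L (GRing.isLinear.Build R _ _ _ L linL).
have -> : L = L' by [].
rewrite {1}(matrix_sum_delta N) linear_sum summxE; apply: eq_bigr => i _.
rewrite linear_sum summxE; apply: eq_bigr => j _.
by rewrite linearZ mxE mulrC.
Qed.

Section Rintegral_linear.
Context d (T : measurableType d) (R : realType) (mu : {measure set T -> \bar R}).
Variable D : set T.
Hypothesis mD : measurable D.

Lemma integrableZl_EFin (k : R) (g : T -> R) :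
  mu.-integrable D (EFin \o g) -> mu.-integrable D (EFin \o (fun x => k * g x)).
Proof.
move=> ig; rewrite (_ : _ \o _ = fun x => (k%:E * (EFin \o g) x)%E).
  exact: integrableZl.
by apply: funext => x; rewrite /= EFinM.
Qed.

Lemma integrableD_EFin (f g : T -> R) :
  mu.-integrable D (EFin \o f) -> mu.-integrable D (EFin \o g) ->
  mu.-integrable D (EFin \o (fun x => f x + g x)).
Proof.
move=> ig ih; rewrite (_ : _ \o _ = (EFin \o f) \+ (EFin \o g)).
  exact: integrableD.
by apply: funext => x; rewrite /= EFinD.
Qed.

Lemma integrable_sum_EFin (I : Type) (s : seq I) (P : pred I) (f : I -> T -> R) :
  (forall i, P i -> mu.-integrable D (EFin \o f i)) ->
  mu.-integrable D (EFin \o (fun x => \sum_(i <- s | P i) f i x)).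
Proof.
move=> intf; rewrite (_ : _ \o _ = fun x => \sum_(i <- s | P i) (f i x)%:E).
  exact: integrable_sum.
by apply: funext => x; rewrite /= sumEFin.
Qed.

Lemma Rintegral_sum (I : Type) (s : seq I) (P : pred I) (f : I -> T -> R) :
  (forall i, P i -> mu.-integrable D (EFin \o f i)) ->
  \int[mu]_(x in D) (\sum_(i <- s | P i) f i x) =
  \sum_(i <- s | P i) \int[mu]_(x in D) f i x.
Proof.
move=> intf; elim: s => [|i s IH].
  by under eq_Rintegral do rewrite big_nil; rewrite Rintegral_cst // mul0r big_nil.
rewrite big_cons; case: ifPn => Pi; last first.
  by rewrite -IH; apply: eq_Rintegral => x _; rewrite big_cons (negbTE Pi).
rewrite -IH -RintegralD //; [|exact: intf|exact: integrable_sum_EFin].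
by apply: eq_Rintegral => x _; rewrite big_cons Pi.
Qed.

End Rintegral_linear.

Section WeightedIntegral.
Variables (R : realType) (K : set (measurableTypeR R)) (w : R -> R).
Hypothesis mK : measurable K.

Definition wintegrable p q (M : R -> 'M[R]_(p, q)) :=
  forall i j, (@leb R).-integrable K (EFin \o (fun t => w t * M t i j)).

Let wlinearE p q p' q' (L : 'M[R]_(p, q) -> 'M[R]_(p', q')) (linL : linear L)
    (M : R -> 'M[R]_(p, q)) a b t :
  w t * L (M t) a b = \sum_i \sum_j L (delta_mx i j) a b * (w t * M t i j).
Proof.
rewrite linear_entry // mulr_sumr; apply: eq_bigr => i _.
by rewrite mulr_sumr; apply: eq_bigr => j _; rewrite mulrCA.
Qed.

Lemma wintegrable_linear p q p' q' (L : 'M[R]_(p, q) -> 'M[R]_(p', q'))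
    (M : R -> 'M[R]_(p, q)) :
  linear L -> wintegrable M -> wintegrable (fun t => L (M t)).
Proof.
move=> linL iM a b; under eq_fun do rewrite (wlinearE linL).
apply: (integrable_sum_EFin mK) => i _; apply: (integrable_sum_EFin mK) => j _.
exact: integrableZl_EFin.
Qed.

Lemma wint_linear p q p' q' (L : 'M[R]_(p, q) -> 'M[R]_(p', q'))
    (M : R -> 'M[R]_(p, q)) :
  linear L -> wintegrable M -> wint K w (fun t => L (M t)) = L (wint K w M).
Proof.
move=> linL iM; apply/matrixP => a b; rewrite mxE linear_entry //.
under eq_Rintegral do rewrite (wlinearE linL).
have iLM i j : (@leb R).-integrable K
    (EFin \o (fun t => L (delta_mx i j) a b * (w t * M t i j))).
  exact: integrableZl_EFin.
rewrite (Rintegral_sum mK) => [|i _]; last exact: (integrable_sum_EFin mK).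
apply: eq_bigr => i _; rewrite (Rintegral_sum mK) //; apply: eq_bigr => j _.
by rewrite RintegralZl // mxE.
Qed.

Lemma wint_tr p q (M : R -> 'M[R]_(p, q)) :
  wint K w (fun t => (M t)^T) = (wint K w M)^T.
Proof. by apply/matrixP => i j; rewrite !mxE; under eq_Rintegral do rewrite mxE. Qed.

Let linear_mxtrace_mul p q (A : 'M[R]_(q, p)) :
  linear (fun N : 'M[R]_(p, q) => (\tr (A *m N))%:M : 'M[R]_1).
Proof.
by move=> c M N; rewrite mulmxDr -scalemxAr mxtraceD mxtraceZ raddfD /= scale_scalar_mx.
Qed.

Lemma integrable_mxtrace_mul p q (A : 'M[R]_(q, p)) (M : R -> 'M[R]_(p, q)) :
  wintegrable M -> (@leb R).-integrable K (EFin \o (fun t => w t * \tr (A *m M t))).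
Proof.
move=> /(wintegrable_linear (linear_mxtrace_mul A))/(_ 0 0).
by under eq_fun do rewrite mxE eqxx mulr1n.
Qed.

Lemma Rintegral_mxtrace_mul p q (A : 'M[R]_(q, p)) (M : R -> 'M[R]_(p, q)) :
  wintegrable M ->
  \int[@leb R]_(t in K) (w t * \tr (A *m M t)) = \tr (A *m wint K w M).
Proof.
move=> /(wint_linear (linear_mxtrace_mul A))/matrixP/(_ 0 0).
by rewrite !mxE eqxx mulr1n; under eq_Rintegral do rewrite mxE eqxx mulr1n.
Qed.

Lemma trmx_wint_outer m p (g : R -> 'cV[R]_m) (h : R -> 'cV[R]_p) :
  (wint K w (fun t => g t *m (h t)^T))^T = wint K w (fun t => h t *m (g t)^T).
Proof. by rewrite -wint_tr; congr wint; apply: funext => t; rewrite trmx_mul trmxK. Qed.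

Lemma unvec_wint_Fk d n (f : R -> 'cV[R]_d) (x : R -> 'cV[R]_n) :
  unvec (wint K w (fun t => Fk n f t *m x t)) = wint K w (fun t => x t *m (f t)^T).
Proof.
apply/matrixP => k i; rewrite !mxE; apply: eq_Rintegral => t _.
by rewrite FkE mxE big_ord1 mxE [f t i 0 * _]mulrC.
Qed.

Lemma Wmx_tensE d n r (f : R -> 'cV[R]_d) (U : 'M[R]_n) (X : 'M[R]_(d * n, r)) :
  wintegrable (fun t => f t *m (f t)^T) ->
  Wmx K w f U X = X^T *m (wint K w (fun t => f t *m (f t)^T) *t invmx U) *m X.
Proof.
move=> iff; have linW : linear (fun N => X^T *m (N *t invmx U) *m X).
  by move=> c M N; rewrite linear_tensmxl mulmxDr mulmxDl -scalemxAr -scalemxAl.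
rewrite -(wint_linear linW iff) /Wmx; congr wint; apply: funext => t.
exact: rowcat_quad_tens.
Qed.

End WeightedIntegral.

Section SquareIntegrable.
Variables (R : realType) (K : set (measurableTypeR R)) (w : R -> R).
Hypotheses (mK : measurable K) (w_ge0 : forall t, K t -> 0 <= w t).
Hypothesis mw : measurable_fun K w.

Lemma wintegrable_outer m p (g : R -> 'cV[R]_m) (h : R -> 'cV[R]_p) :
  L2w K w g -> L2w K w h -> wintegrable K w (fun t => g t *m (h t)^T).
Proof.
move=> [mg ig] [mh ih] i j.
under eq_fun do rewrite mxE big_ord1 mxE.
apply: le_integrable (integrableD mK ig ih) => //.
  by apply/measurable_EFinP; apply: measurable_funM mw (measurable_funM (mg i) (mh j)).
move=> t Kt /=; rewrite lee_fin -mulrDr !normrM (ger0_norm (w_ge0 Kt)).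
apply: ler_wpM2l; first exact: w_ge0.
have gi := sqr_coord_le_dotmx (g t) i; have hj := sqr_coord_le_dotmx (h t) j.
have ab : `|g t i 0| * `|h t j 0| <= g t i 0 ^+ 2 + h t j 0 ^+ 2.
  rewrite -[g t i 0 ^+ 2]real_normK ?num_real // -[h t j 0 ^+ 2]real_normK ?num_real //.
  by have := normr_ge0 (g t i 0); have := normr_ge0 (h t j 0); nra.
by apply: le_trans (ab) (le_trans (lerD gi hj) (ler_norm _)).
Qed.

Lemma integrable_bilin m p (A : 'M[R]_(p, m)) (g : R -> 'cV[R]_m) (h : R -> 'cV[R]_p) :
  L2w K w g -> L2w K w h ->
  (@leb R).-integrable K (EFin \o (fun t => w t * ((h t)^T *m A *m g t) 0 0)).
Proof.
move=> Lg Lh; under eq_fun do rewrite bilin_mxtrace.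
exact/integrable_mxtrace_mul/wintegrable_outer.
Qed.

Lemma Rintegral_bilin m p (A : 'M[R]_(p, m)) (g : R -> 'cV[R]_m) (h : R -> 'cV[R]_p) :
  L2w K w g -> L2w K w h ->
  \int[@leb R]_(t in K) (w t * ((h t)^T *m A *m g t) 0 0) =
  \tr (A *m wint K w (fun t => g t *m (h t)^T)).
Proof.
move=> Lg Lh; under eq_Rintegral do rewrite bilin_mxtrace.
exact/Rintegral_mxtrace_mul/wintegrable_outer.
Qed.

Lemma psdmx_wint_outer_tens m n (g : R -> 'cV[R]_m) (B : 'M[R]_n) :
  L2w K w g -> psdmx B -> psdmx (wint K w (fun t => g t *m (g t)^T) *t B).
Proof.
move=> Lg psdB u; rewrite tens_quad_mxtrace trmx_wint_outer.
rewrite -(Rintegral_bilin _ Lg Lg).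
apply: Rintegral_ge0 => t Kt; apply: mulr_ge0; first exact: w_ge0.
by have := psdB (unvec u *m g t); rewrite trmx_mul !mulmxA.
Qed.

Lemma bessel_mxtrace m p (x : R -> 'cV[R]_m) (f : R -> 'cV[R]_p) (U : 'M[R]_m) :
  L2w K w x -> L2w K w f -> U^T = U -> psdmx U ->
  wint K w (fun t => f t *m (f t)^T) \in unitmx ->
  \tr ((wint K w (fun t => x t *m (f t)^T))^T *m U *m wint K w (fun t => x t *m (f t)^T)
       *m invmx (wint K w (fun t => f t *m (f t)^T))) <=
  \int[@leb R]_(t in K) (w t * ((x t)^T *m U *m x t) 0 0).
Proof.
move=> Lx Lf sU psdU uG; set S := wint K w _; set G := wint K w _.
set C := S *m invmx G.
have sGi : (invmx G)^T = invmx G by rewrite trmx_inv /G trmx_wint_outer.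
have Cf t : ((x t - C *m f t)^T *m U *m (x t - C *m f t)) 0 0 =
    ((x t)^T *m U *m x t) 0 0 - 2 * ((f t)^T *m (C^T *m U) *m x t) 0 0
    + ((f t)^T *m (C^T *m U *m C) *m f t) 0 0.
  by rewrite quad_subE // trmx_mul !mulmxA.
have ix := integrable_bilin U Lx Lx.
have ixf := integrable_bilin (C^T *m U) Lx Lf.
have iff := integrable_bilin (C^T *m U *m C) Lf Lf.
have : 0 <= \int[@leb R]_(t in K)
              (w t * ((x t - C *m f t)^T *m U *m (x t - C *m f t)) 0 0).
  by apply: Rintegral_ge0 => t Kt; rewrite mulr_ge0 ?w_ge0.
under eq_Rintegral do rewrite Cf mulrDr mulrBr mulrCA -mulNr.
have i2 := integrableZl_EFin mK (-2) ixf.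
rewrite (RintegralD mK (integrableD_EFin mK ix i2) iff) (RintegralD mK ix i2).
rewrite (RintegralZl _ mK ixf) !Rintegral_bilin // -/S -/G.
have e1 : \tr (C^T *m U *m S) = \tr (S^T *m U *m S *m invmx G).
  by rewrite /C trmx_mul sGi -!mulmxA mxtrace_mulC !mulmxA.
have e2 : \tr (C^T *m U *m C *m G) = \tr (S^T *m U *m S *m invmx G).
  by rewrite -e1 /C -!mulmxA mulVmx // mulmx1.
rewrite e1 e2; lra.
Qed.

End SquareIntegrable.

Theorem corollary2 (R : realType) (K : set R) (w : R -> R) (d n rho : nat)
  (f : R -> 'cV[R]_d) (U : 'M[R]_n) (x : R -> 'cV[R]_n)
  (Ups : 'M[R]_(d * n, rho * n)) (z : 'cV[R]_(rho * n)) :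
  measurable K -> (0 < leb K)%E ->
  (forall t, K t -> 0 <= w t) ->
  (@leb R).-integrable K (fun t => (w t)%:E) ->
  countable [set t | K t /\ w t = 0] ->
  L2w K w f ->
  posdef (wint K w (fun t => f t *m (f t)^T)) ->
  U^T = U -> posdef U ->
  L2w K w x ->
  Ups *m z = wint K w (fun t => Fk n f t *m x t) ->
  let Finv := wint K w (fun t => f t *m (f t)^T) in
  let theta := wint K w (fun t => Fk n f t *m x t) in
  let rhs := fun Xhat : 'M[R]_(d * n, rho * n) =>
    (z^T *m (Ups^T *m Xhat + Xhat^T *m Ups
             - Xhat^T *m (Finv *t invmx U) *m Xhat) *m z) 0 0 in
  [/\ forall Xhat, rhs Xhat <= Rintegral (@leb R) K
                     (fun t => w t * ((x t)^T *m U *m x t) 0 0),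
      forall Xhat, rhs Xhat =
        (z^T *m (Ups^T *m Xhat + Xhat^T *m Ups - Wmx K w f U Xhat) *m z) 0 0,
      forall Xhat, rhs Xhat <= (theta^T *m (invmx Finv *t U) *m theta) 0 0 &
      rhs ((invmx Finv *t U) *m Ups) = (theta^T *m (invmx Finv *t U) *m theta) 0 0].
Proof.
move=> mK _ w_ge0 iw _ Lf pF sU pU Lx eqz Finv theta rhs.
have {}eqz : Ups *m z = theta := eqz.
have mw : measurable_fun K w by apply/measurable_EFinP; exact: measurable_int iw.
set M := Finv *t invmx U; set P := invmx Finv *t U.
have sP : P^T = P by rewrite trmx_tens trmx_inv trmx_wint_outer sU.
have MP : M *m P = 1%:M.
  by rewrite /P -[U in _ *t U]invmxK mulmx_tens_invmx ?unitmx_inv // posdef_unitmx.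
have psdM : psdmx M := psdmx_wint_outer_tens mK w_ge0 mw Lf (psdmx_invmx sU pU).
have rhsE X : rhs X = (theta^T *m (X *m z) + (X *m z)^T *m theta
                       - (X *m z)^T *m M *m (X *m z)) 0 0.
  by rewrite /rhs -eqz mulmxBr mulmxDr mulmxBl mulmxDl !trmx_mul !mulmxA.
have rhs_le X : rhs X <= (theta^T *m P *m theta) 0 0.
  by rewrite rhsE completing_square_le.
have bessel : (theta^T *m P *m theta) 0 0 <=
              \int[@leb R]_(t in K) (w t * ((x t)^T *m U *m x t) 0 0).
  rewrite tens_quad_mxtrace unvec_wint_Fk trmx_inv [Finv^T]trmx_wint_outer.
  exact: bessel_mxtrace (posdef_psdmx pU) (posdef_unitmx pF).
split => [X|X|//|].
- exact: le_trans (rhs_le X) bessel.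
- by rewrite (Wmx_tensE mK _ _ (wintegrable_outer mK w_ge0 mw Lf Lf)).
- by rewrite rhsE -[P *m Ups *m z]mulmxA eqz completing_square_eq.
Qed.
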